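(* Let $G=(V,E)$ be a connected graph and $d\ge 1$ an integer, and let $G^{(d)}$ be the graph obtained from $G$ by replacing each edge $xy\in E$ by a path of length $d$ connecting $x$ and $y$ (i.e., subdividing each edge by $d-1$ new vertices). Then $$\textrm{cn}(G) \le \textrm{cn}(G^{(d)}) \le \textrm{cn}(G)+1.$$
   Context: Game of cops and robber on a finite graph: $k$ cops are placed on vertices (possibly several on one vertex), then the robber is placed; players alternate starting with the cops; in a move each cop and, on his turn, the robber stays or moves to an adjacent vertex. The robber is captured when a cop occupies his vertex. $\textrm{cn}(G)$ is the least $k$ such that $k$ cops have a strategy guaranteeing capture. *)

From mathcomp Require Import all_boot.
From mathcomp Require Import boolp.
Set Implicit Arguments. Unset Strict Implicit. Unset Printing Implicit Defensive.

Definition simple_graph (V : finType) (e : rel V) :=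
  symmetric e /\ irreflexive e.
Definition connected_graph (V : finType) (e : rel V) :=
  forall x y : V, connect e x y.

Section CopsRobber.
Variables (V : finType) (e : rel V).

Definition step (x y : V) : bool := (x == y) || e x y.

Definition cops_move (k : nat) (c c' : {ffun 'I_k -> V}) : Prop :=
  forall i, step (c i) (c' i).

Definition captured (k : nat) (c : {ffun 'I_k -> V}) (r : V) : Prop :=
  exists i, c i = r.

Inductive cw (k : nat) : {ffun 'I_k -> V} -> V -> Prop :=
| cw_cap c r : captured c r -> cw c r
| cw_step c r c' : cops_move c c' ->
    (captured c' r \/ (forall r', step r r' -> cw c' r')) -> cw c r.

(* k cops have a winning strategy: they choose initial positions, then the
   robber chooses his, then the cops move first. *)
Definition cop_win (k : nat) : Prop :=
  exists c0 : {ffun 'I_k -> V}, forall r0 : V, cw c0 r0.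

(* cop number: least k such that k cops win. Since #|V| cops always win
   (one per vertex), the least such k lies in [0, #|V|], so searching
   iota 0 #|V|.+1 gives the minimum. *)
Definition cop_number : nat :=
  find (fun k => `[< cop_win k >]) (iota 0 #|V|.+1).

End CopsRobber.

(* Vertices: original vertices (inl x), and interior vertices inr (x,y,i)
   with e x y, x before y in enum order (one orientation per edge),
   and 0 < i < d (position i along the path from x to y). *)
Section Subdivision.
Variables (T : finType) (e : rel T) (d : nat).

Definition svalid (v : T + (T * T * 'I_d)) : bool :=
  match v with
  | inl _ => true
  | inr (x, y, i) => [&& e x y, (enum_rank x < enum_rank y)%N & (0 < i)%N]
  end.

Definition subdiv_vert := {v : T + (T * T * 'I_d) | svalid v}.

Definition sadj0 (u v : T + (T * T * 'I_d)) : bool :=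
  match u, v with
  | inl x, inl y => (d == 1) && e x y
  | inl x, inr (a, b, i) => ((x == a) && (i == 1 :> nat)) || ((x == b) && (i == d.-1 :> nat))
  | inr (a, b, i), inr (a', b', j) => [&& a == a', b == b' & (i.+1 == j :> nat)]
  | inr _, inl _ => false
  end.

Definition subdiv_rel : rel subdiv_vert :=
  fun u v => sadj0 (val u) (val v) || sadj0 (val v) (val u).

End Subdivision.

From mathcomp Require Import all_boot.
From mathcomp Require Import boolp.
From mathcomp Require Import zify.
Set Implicit Arguments. Unset Strict Implicit. Unset Printing Implicit Defensive.

(* Cops on G copy a winning strategy on G^(d) against a
   robber of G^(d) who walks, d moves at a time, along the subdivided edges
   of the moves of the robber on G.  Each cop on G stays near its
   counterpart (within d/2 plus the number of moves made along the current
   edge) and moves only when the walking robber reaches a vertex of G, so a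
   capture in G^(d) leaves some cop on G adjacent to the robber on G.

   One extra cop chases the robber along shortest paths.  The
   potential 2 dist + [the robber did not just step straight away] never
   increases and drops whenever the robber stays or turns back, so the robber
   must keep crossing whole subdivided edges.  Meanwhile the other cops walk
   to the initial position of a winning strategy on G and then, each time the
   robber leaves a vertex of G towards N, answer as that strategy answers a
   robber at N, crossing their own subdivided edges in step with him. *)

Section CopNumber.
Variables (V : finType) (e : rel V).

Lemma cop_win_card : cop_win e #|V|.
Proof.
exists [ffun i => enum_val i] => r; apply: cw_cap.
by exists (enum_rank r); rewrite ffunE enum_rankK.
Qed.

Lemma cop_number_min k : cop_win e k -> cop_number e <= k.
Proof.
move=> win; rewrite leqNgt; apply/negP => lt_k.
have k_small : k < #|V|.+1.
  by rewrite -[#|V|.+1](size_iota 0); apply: leq_trans lt_k (find_size _ _).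
by have /asboolP := before_find 0 lt_k; rewrite nth_iota.
Qed.

Lemma cop_number_le_card : cop_number e <= #|V|.
Proof. exact/cop_number_min/cop_win_card. Qed.

Lemma cop_win_cop_number : cop_win e (cop_number e).
Proof.
have has_win : has (fun k => `[< cop_win e k >]) (iota 0 #|V|.+1).
  apply/hasP; exists #|V|; first by rewrite mem_iota add0n ltnSn.
  by apply/asboolP; apply: cop_win_card.
have /asboolP := nth_find 0 has_win.
by move: has_win; rewrite has_find size_iota => /nth_iota->.
Qed.

Lemma cw_adjacent k (c : {ffun 'I_k -> V}) i r : step e (c i) r -> cw e c r.
Proof.
move=> cr; apply: (@cw_step _ _ _ _ _ [ffun j => if j == i then r else c j]).
  by move=> j; rewrite ffunE; case: eqP => [->|_] //; rewrite /step eqxx.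
by left; exists i; rewrite ffunE eqxx.
Qed.

End CopNumber.

(* The induction principle generated for [cw] gives no hypothesis on the
   recursive occurrences nested under the disjunction. *)
Section CwInduction.
Variables (V : finType) (e : rel V) (k : nat).
Variable P : {ffun 'I_k -> V} -> V -> Prop.
Hypothesis P_cap : forall c r, captured c r -> P c r.
Hypothesis P_step : forall c r c', cops_move e c c' ->
  captured c' r \/ (forall r', step e r r' -> cw e c' r' /\ P c' r') -> P c r.

Fixpoint cw_ind_strong c r (w : cw e c r) {struct w} : P c r :=
  match w with
  | cw_cap c r cap => P_cap cap
  | cw_step c r c' move next =>
    P_step move (match next with
                 | or_introl cap => or_introl cap
                 | or_intror w' => or_intror (fun r' rr' =>
                                     conj (w' r' rr') (cw_ind_strong (w' r' rr')))
                 end)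
  end.

End CwInduction.

Section Distance.
Variables (V : finType) (E : rel V).
Hypothesis E_connected : connected_graph E.

Lemma step_connect (u v : V) : step E u v -> connect E u v.
Proof. by case/orP => [/eqP ->|uv]; [apply: connect0 | apply: connect1]. Qed.

Fixpoint reach_in n (x y : V) : bool :=
  if n is n'.+1 then [exists z, step E x z && reach_in n' z y] else x == y.

Lemma reach_inSl n x z y : step E x z -> reach_in n z y -> reach_in n.+1 x y.
Proof. by move=> xz zy; apply/existsP; exists z; rewrite xz. Qed.

Lemma reach_inSr n x y y' : reach_in n x y -> step E y y' -> reach_in n.+1 x y'.
Proof.
elim: n x => [|n IH] x /=.
  by move/eqP=> -> yy'; apply/existsP; exists y'; rewrite yy' /=.
by case/existsP=> z /andP [xz zy] yy'; apply: reach_inSl xz (IH _ zy yy').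
Qed.

Lemma reach_in_exists x y : exists n, reach_in n x y.
Proof.
have /connectP [p xp ->] := E_connected x y; exists (size p).
elim: p x xp => [|z p IH] x //= /andP [xz zp].
by apply: reach_inSl (IH _ zp); rewrite /step xz orbT.
Qed.

Definition dist x y := ex_minn (reach_in_exists x y).

Lemma reach_in_dist x y : reach_in (dist x y) x y.
Proof. by rewrite /dist; case: ex_minnP. Qed.

Lemma dist_min n x y : reach_in n x y -> dist x y <= n.
Proof. by rewrite /dist; case: ex_minnP => m _; apply. Qed.

Lemma dist_eq0 x y : (dist x y == 0) = (x == y).
Proof.
apply/idP/eqP => [/eqP d0 | ->]; first by have := reach_in_dist x y; rewrite d0 => /eqP.
by rewrite -leqn0; apply: dist_min => /=.
Qed.

Lemma dist_stepr x y y' : step E y y' -> dist x y' <= (dist x y).+1.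
Proof. by move=> yy'; apply: dist_min; apply: reach_inSr (reach_in_dist _ _) yy'. Qed.

Lemma dist_stepl x x' y : step E x x' -> dist x y <= (dist x' y).+1.
Proof. by move=> xx'; apply: dist_min; apply: reach_inSl xx' (reach_in_dist _ _). Qed.

Lemma dist_toward x y : exists2 x', step E x x' & dist x' y = (dist x y).-1.
Proof.
case dxy: (dist x y) => [|n].
  by exists x; rewrite ?dxy // /step eqxx.
have /existsP [z /andP [xz zy]] : reach_in n.+1 x y by rewrite -dxy reach_in_dist.
exists z => //; apply/eqP; rewrite eqn_leq dist_min //=.
by have := dist_stepl y xz; rewrite dxy.
Qed.

(* The cop at [x] pursues the robber at [r], who stood at [q] one move
   earlier; the extra unit is saved only while the robber keeps stepping
   straight away from the cop. *)
Definition potential x r q := 2 * dist x r + (dist x r != (dist x q).+1).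

Lemma chaser_move x r q : step E q r -> exists2 x', step E x x' &
  x' = r \/ forall r', step E r r' ->
    potential x' r' r <= potential x r q /\
    (r' = r \/ r' = q -> potential x' r' r < potential x r q).
Proof.
move=> qr; set D := dist x r; set Q := dist x q.
have [x' xx' [x'r x'q]] : exists2 x', step E x x' &
    dist x' r = D.-1 /\ (D = Q.+1 -> 0 < Q -> dist x' q = Q.-1).
  (* If [r] lies one step beyond [q], a step towards [q] is also one towards [r]. *)
  case: (boolP ((D == Q.+1) && (0 < Q))) => [/andP [/eqP DQ Q_pos] | away].
    have [x' xx' x'q] := dist_toward x q; exists x' => //; split => //.
    by have := dist_stepr x' qr; have := dist_stepl r xx'; rewrite -/D -/Q; lia.
  have [x' xx' x'r] := dist_toward x r; exists x' => //; split => // DQ Q_pos.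
  by move: away; rewrite DQ eqxx Q_pos.
exists x' => //; have [<-|x'r_neq] := eqVneq x' r; [by left | right] => r' rr'.
have x'r_pos : 0 < dist x' r by rewrite lt0n dist_eq0.
have := dist_stepr x' rr'; rewrite /potential -/D -/Q x'r => x'r'.
split; first by case: eqP; lia.
rewrite x'r in x'r_pos; case=> r'E; subst r'.
  by rewrite x'r; case: eqP; lia.
have [DQ|_] := eqVneq D Q.+1; last by case: eqP => /=; lia.
by rewrite (x'q DQ); [case: eqP => /=; lia | lia].
Qed.

End Distance.

Section Pursuit.
Variables (V : finType) (E : rel V) (k : nat).
Hypothesis E_connected : connected_graph E.
Local Notation dist := (dist E_connected).
Local Notation potential := (potential E_connected).

Definition add_cop (o : {ffun 'I_k -> V}) (x : V) : {ffun 'I_k.+1 -> V} :=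
  [ffun i => if unlift ord_max i is Some j then o j else x].

Lemma add_cop_move (o o' : {ffun 'I_k -> V}) x x' :
  (forall j, step E (o j) (o' j)) -> step E x x' ->
  cops_move E (add_cop o x) (add_cop o' x').
Proof. by move=> oo' xx' i; rewrite !ffunE; case: unliftP. Qed.

Lemma captured_chaser (o : {ffun 'I_k -> V}) x : captured (add_cop o x) x.
Proof. by exists ord_max; rewrite ffunE unlift_none. Qed.

Lemma captured_add_cop (o : {ffun 'I_k -> V}) x r :
  captured o r -> captured (add_cop o x) r.
Proof. by case=> j <-; exists (lift ord_max j); rewrite ffunE liftK. Qed.

Definition chaser_wins_below n := forall (o : {ffun 'I_k -> V}) x r q,
  step E q r -> potential x r q < n -> cw E (add_cop o x) r.

(* A robber who stays or steps back to [q] lowers the potential, so only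
   his forward moves need a continuation. *)
Lemma chase_round n (o o' : {ffun 'I_k -> V}) x r q : chaser_wins_below n ->
  step E q r -> (forall j, step E (o j) (o' j)) -> potential x r q <= n ->
  (forall x' r', step E r r' -> r' != r -> r' != q ->
     ~ captured (add_cop o' x') r -> potential x' r' r <= n ->
     cw E (add_cop o' x') r') ->
  cw E (add_cop o x) r.
Proof.
move=> below qr oo' le_n forward.
have [x' xx' chase] := chaser_move E_connected x qr.
apply: (@cw_step _ _ _ _ _ (add_cop o' x')); first exact: add_cop_move.
have [cap|not_cap] := pselect (captured (add_cop o' x') r); [by left | right => r' rr'].
case: chase => [x'r|decrease]; first by case: not_cap; rewrite -x'r; apply: captured_chaser.
have [le_pot lt_pot] := decrease r' rr'.
have [r'r|r'r] := eqVneq r' r.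
  by apply: below rr' _; apply: leq_trans (lt_pot (or_introl r'r)) le_n.
have [r'q|r'q] := eqVneq r' q.
  by apply: below rr' _; apply: leq_trans (lt_pot (or_intror r'q)) le_n.
exact: forward (leq_trans le_pot le_n).
Qed.

Lemma chase_travel n (t : {ffun 'I_k -> V}) : chaser_wins_below n ->
  (forall x r q, step E q r -> potential x r q <= n -> cw E (add_cop t x) r) ->
  forall (o : {ffun 'I_k -> V}) x r q,
    step E q r -> potential x r q <= n -> cw E (add_cop o x) r.
Proof.
move=> below at_t o x r q.
have [M] : exists M, forall j, dist (o j) (t j) <= M.
  by exists (\max_j dist (o j) (t j)) => j; apply: leq_bigmax.
elim: M o x r q => [|M IH] o x r q far qr le_n.
  suff -> : o = t by exact: at_t qr le_n.
  by apply/ffunP => j; apply/eqP; rewrite -(dist_eq0 E_connected) -leqn0.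
have toward j : exists y, step E (o j) y && (dist y (t j) == (dist (o j) (t j)).-1).
  have [y oy yt] := dist_toward E_connected (o j) (t j).
  by exists y; rewrite oy yt eqxx.
pose o' := [ffun j => xchoose (toward j)].
have [oo' far'] : (forall j, step E (o j) (o' j)) /\ (forall j, dist (o' j) (t j) <= M).
  split=> j; rewrite ffunE; case/andP: (xchooseP (toward j)) => // _ /eqP ->.
  by have := far j; lia.
apply: chase_round below qr oo' le_n _ => x' r' rr' _ _ _.
exact: IH far' rr'.
Qed.

Lemma chase_win (t : {ffun 'I_k -> V}) :
  (forall n, chaser_wins_below n ->
     forall x r q, step E q r -> potential x r q <= n -> cw E (add_cop t x) r) ->
  forall (o : {ffun 'I_k -> V}) x r, cw E (add_cop o x) r.
Proof.
move=> at_t o x r.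
suff win n : forall (o : {ffun 'I_k -> V}) x r q,
    step E q r -> potential x r q <= n -> cw E (add_cop o x) r.
  by apply: (win _ o x r r) => //; rewrite /step eqxx.
elim/ltn_ind: n => n IH.
have below : chaser_wins_below n.
  by move=> o' x' r' q' qr lt_n; apply: IH lt_n _ _ _ _ qr (leqnn _).
exact: chase_travel below (at_t n below).
Qed.

End Pursuit.

Section Subdivision.
Variables (T : finType) (e : rel T) (d' : nat).
Hypotheses (e_sym : symmetric e) (e_irr : irreflexive e).
Local Notation d := d'.+1.
Local Notation W := (T + (T * T * 'I_d))%type.
Local Notation V := (subdiv_vert e d).
Local Notation E := (@subdiv_rel T e d).

Definition orig (x : T) : V := exist _ (inl x) isT.

(* The vertex at distance [m <= d] from [x] on the subdivided edge [xy];
   it is [x] itself when [x = y], so that it is meaningful along any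
   [step e x y]. *)
Definition edge_pt_raw (x y : T) (m : nat) : W :=
  if (x == y) || (m == 0) then inl x else if d <= m then inl y
  else if enum_rank x < enum_rank y then inr (x, y, inord m)
  else inr (y, x, inord (d - m)).

Definition edge_pt (x y : T) m : V := insubd (orig x) (edge_pt_raw x y m).

Lemma edge_neq (x y : T) : e x y -> x != y.
Proof. by apply: contraTneq => ->; rewrite e_irr. Qed.

Lemma enum_rank_gtn (x y : T) : x != y ->
  (enum_rank x < enum_rank y) = false -> enum_rank y < enum_rank x.
Proof.
move=> xy /negbT; rewrite -leqNgt leq_eqVlt => /orP [/eqP/val_inj/enum_rank_inj yx|//].
by rewrite yx eqxx in xy.
Qed.

Lemma edge_pt_raw_valid (x y : T) m : step e x y -> svalid e (edge_pt_raw x y m).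
Proof.
rewrite /step /edge_pt_raw; case: eqP => [//|/eqP xy] /= exy.
case: eqP => // /eqP m0; case: leqP => // lt_md.
case: ifP => xy_rank /=; first by rewrite exy xy_rank inordK //; lia.
by rewrite e_sym exy (enum_rank_gtn xy xy_rank) inordK //=; lia.
Qed.

Lemma edge_pt_val (x y : T) m : step e x y -> val (edge_pt x y m) = edge_pt_raw x y m.
Proof. by move=> xy; rewrite /edge_pt insubdK //; apply: edge_pt_raw_valid. Qed.

Lemma edge_pt_rawxx (x : T) m : edge_pt_raw x x m = inl x.
Proof. by rewrite /edge_pt_raw eqxx. Qed.

Lemma edge_pt_raw0 (x y : T) : edge_pt_raw x y 0 = inl x.
Proof. by rewrite /edge_pt_raw orbT. Qed.

Lemma edge_pt_raw_end (x y : T) m : d <= m -> edge_pt_raw x y m = inl y.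
Proof.
move=> dm; rewrite /edge_pt_raw dm; case: eqP => [->|_] //=.
by case: eqP => // m0; move: dm; rewrite m0.
Qed.

Lemma edge_pt_raw_inner (x y : T) m : x != y -> 0 < m < d ->
  edge_pt_raw x y m = if enum_rank x < enum_rank y then inr (x, y, inord m)
                      else inr (y, x, inord (d - m)).
Proof.
move=> xy /andP [m_pos lt_md]; rewrite /edge_pt_raw (negPf xy) /=.
by rewrite (ifF _ _ (_ : m == 0 = false)) ?(ifF _ _ (_ : d <= m = false)) //; lia.
Qed.

Lemma edge_pt_raw_sym (x y : T) m : m <= d -> edge_pt_raw x y m = edge_pt_raw y x (d - m).
Proof.
move=> le_md; have [->|xy] := eqVneq x y; first by rewrite !edge_pt_rawxx.
have [->|m_pos] := posnP m; first by rewrite subn0 edge_pt_raw0 edge_pt_raw_end.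
have [lt_md|ge_md] := ltnP m d; last first.
  have -> : m = d by lia.
  by rewrite subnn edge_pt_raw0 edge_pt_raw_end.
rewrite edge_pt_raw_inner ?m_pos ?lt_md // edge_pt_raw_inner 1?eq_sym //; last by lia.
case: ifP => xy_rank; case: ifP => yx_rank.
- by move: xy_rank yx_rank; lia.
- by have -> : d - (d - m) = m by lia.
- by [].
- by have := enum_rank_gtn xy xy_rank; lia.
Qed.

Lemma edge_pt_raw_nbr (a b : T) (i : 'I_d) (w : W) : e a b -> 0 < i -> svalid e w ->
  sadj0 e (inr (a, b, i)) w || sadj0 e w (inr (a, b, i)) ->
  w = edge_pt_raw a b i.-1 \/ w = edge_pt_raw a b i.+1.
Proof.
move=> ab i_pos; have ab_neq := edge_neq ab; have lt_id := ltn_ord i.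
case: w => [z | [[a' b'] j]] /=.
  move=> _ /orP [] /andP [/eqP -> /eqP i_end].
    by left; rewrite i_end edge_pt_raw0.
  by right; rewrite edge_pt_raw_end //; lia.
have lt_jd := ltn_ord j.
case/and3P => _ ab_rank j_pos /orP [] /and3P [/eqP aa' /eqP bb' /eqP ij];
  subst a' b'.
  right; rewrite edge_pt_raw_inner ?ab_rank //; last by lia.
  by congr inr; congr pair; apply: val_inj; rewrite /= inordK; lia.
left; rewrite edge_pt_raw_inner ?ab_rank //; last by lia.
by congr inr; congr pair; apply: val_inj; rewrite /= inordK; lia.
Qed.

Lemma insubd_inl (u : V) (x : T) : insubd u (inl x) = orig x.
Proof. by apply: val_inj; rewrite insubdK. Qed.

Lemma edge_ptxx (x : T) m : edge_pt x x m = orig x.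
Proof. by rewrite /edge_pt edge_pt_rawxx insubd_inl. Qed.

Lemma edge_pt0 (x y : T) : edge_pt x y 0 = orig x.
Proof. by rewrite /edge_pt edge_pt_raw0 insubd_inl. Qed.

Lemma edge_pt_end (x y : T) m : d <= m -> edge_pt x y m = orig y.
Proof. by move=> dm; rewrite /edge_pt edge_pt_raw_end // insubd_inl. Qed.

Lemma step_sym (x y : T) : step e x y -> step e y x.
Proof. by rewrite /step eq_sym e_sym. Qed.

Lemma edge_pt_sym (x y : T) m : step e x y -> m <= d ->
  edge_pt x y m = edge_pt y x (d - m).
Proof.
move=> xy le_md; apply: val_inj.
rewrite edge_pt_val // edge_pt_val; [exact: edge_pt_raw_sym | exact: step_sym].
Qed.

Lemma subdiv_rel_sym : symmetric E.
Proof. by move=> u v; rewrite /subdiv_rel orbC. Qed.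

Lemma edge_pt_nbr (a b : T) m v : e a b -> 0 < m < d -> E (edge_pt a b m) v ->
  v = edge_pt a b m.-1 \/ v = edge_pt a b m.+1.
Proof.
move=> ab m_in; have ab_step : step e a b by rewrite /step ab orbT.
suff raw_nbr : E (edge_pt a b m) v ->
    val v = edge_pt_raw a b m.-1 \/ val v = edge_pt_raw a b m.+1.
  by case/raw_nbr => vE; [left | right]; apply: val_inj; rewrite edge_pt_val.
rewrite /subdiv_rel edge_pt_val // edge_pt_raw_inner ?edge_neq //.
case: ifP => _ adj.
  have i_pos : 0 < (inord m : 'I_d) by rewrite inordK; lia.
  by have := edge_pt_raw_nbr ab i_pos (valP v) adj; rewrite inordK //; lia.
have ba : e b a by rewrite e_sym.
have i_pos : 0 < (inord (d - m) : 'I_d) by rewrite inordK; lia.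
have := edge_pt_raw_nbr ba i_pos (valP v) adj; rewrite inordK; last by lia.
rewrite (edge_pt_raw_sym b a (_ : (d - m).-1 <= d)); last by lia.
rewrite (edge_pt_raw_sym b a (_ : (d - m).+1 <= d)); last by lia.
have -> : d - (d - m).-1 = m.+1 by lia.
have -> : d - (d - m).+1 = m.-1 by lia.
by case=> ->; [right | left].
Qed.

Lemma orig_nbr (x : T) w : E (orig x) w -> exists2 z, e x z & w = edge_pt x z 1.
Proof.
rewrite /subdiv_rel /=; case: w => [[z | [[a b] i]] w_valid] /=.
  rewrite (e_sym z) orbb => /andP [/eqP d1 xz]; exists z => //.
  by apply: val_inj; rewrite edge_pt_val /= ?edge_pt_raw_end ?d1 // /step xz orbT.
have /and3P [ab ab_rank i_pos] := w_valid; have lt_id := ltn_ord i.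
rewrite orbF => /orP [] /andP [/eqP xa /eqP i_end]; subst x.
  exists b => //; apply: val_inj; rewrite edge_pt_val /=; last by rewrite /step ab orbT.
  rewrite edge_pt_raw_inner ?edge_neq ?ab_rank //; last by lia.
  by congr inr; congr pair; apply: val_inj; rewrite /= inordK; lia.
exists a; first by rewrite e_sym.
apply: val_inj; rewrite edge_pt_val /=; last by rewrite /step e_sym ab orbT.
rewrite edge_pt_raw_inner 1?eq_sym ?edge_neq //; last by lia.
rewrite ifF; last by apply/negbTE; rewrite -leqNgt ltnW.
by congr inr; congr pair; apply: val_inj; rewrite /= inordK; lia.
Qed.

Lemma edge_pt_step (x y : T) m : step e x y -> m < d ->
  step E (edge_pt x y m) (edge_pt x y m.+1).
Proof.
move=> xy_step lt_md; have [<-|xy] := eqVneq x y; first by rewrite !edge_ptxx /step eqxx.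
have xy_edge : e x y by move: xy_step; rewrite /step (negPf xy).
apply/orP; right; rewrite /subdiv_rel !edge_pt_val //.
have [->|m_pos] := posnP m.
  rewrite edge_pt_raw0; have [d1|d_gt1] := leqP d 1.
    by rewrite edge_pt_raw_end //= xy_edge andbT; apply/eqP; lia.
  rewrite edge_pt_raw_inner //; case: ifP => _ /=; rewrite inordK ?eqxx //; lia.
rewrite (edge_pt_raw_inner xy (_ : 0 < m < d)); last by lia.
have [lt_m1d|] := ltnP m.+1 d.
  rewrite (edge_pt_raw_inner xy (_ : 0 < m.+1 < d)); last by lia.
  by case: ifP => _ /=; rewrite !inordK ?eqxx //= ?orbT; try lia; apply/eqP; lia.
move=> ge_m1d; rewrite edge_pt_raw_end //.
by case: ifP => _ /=; rewrite inordK ?eqxx ?orbT //; lia.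
Qed.

Lemma subdiv_vertP (v : V) : (exists x, v = orig x) \/
  (exists a b m, [/\ e a b, 0 < m < d & v = edge_pt a b m]).
Proof.
case: v => [[x|[[a b] i]] v_valid]; first by left; exists x; apply: val_inj.
right; have /and3P [ab ab_rank i_pos] := v_valid.
exists a, b, i; split; rewrite ?i_pos ?ltn_ord //; apply: val_inj.
rewrite edge_pt_val /=; last by rewrite /step ab orbT.
rewrite edge_pt_raw_inner ?edge_neq ?i_pos ?ltn_ord ?ab_rank //.
by congr inr; congr pair; apply: val_inj; rewrite /= inordK.
Qed.

Lemma subdiv_edgeP (u v : V) : step E u v -> u != v ->
  exists a b m, [/\ e a b, 0 < m <= d, u = edge_pt a b m.-1 & v = edge_pt a b m].
Proof.
rewrite /step => /orP [/eqP ->|uv]; first by rewrite eqxx.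
move=> _; case: (subdiv_vertP u) => [[x ->{u}]|[a [b [m [ab m_in ->{u}]]]]] in uv *.
  by have [z xz ->] := orig_nbr uv; exists x, z, 1; rewrite edge_pt0.
have ab_step : step e a b by rewrite /step ab orbT.
case: (edge_pt_nbr ab m_in uv) => ->; last by exists a, b, m.+1; split => //; lia.
exists b, a, (d - m).+1; split; first by rewrite e_sym.
- by lia.
- by rewrite (@edge_pt_sym a b m) //; lia.
- by rewrite (@edge_pt_sym a b m.-1) //; [congr edge_pt; lia | lia].
Qed.

Lemma connect_edge_pt (x y : T) m : step e x y -> m <= d ->
  connect E (orig x) (edge_pt x y m).
Proof.
move=> xy; elim: m => [|m IH] le_md; first by rewrite edge_pt0 connect0.
by apply: connect_trans (IH (ltnW le_md)) (step_connect (edge_pt_step xy le_md)).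
Qed.

Lemma subdiv_connected : connected_graph e -> connected_graph E.
Proof.
move=> e_conn.
have from_orig u : exists x, connect E (orig x) u.
  case: (subdiv_vertP u) => [[x ->]|[a [b [m [ab m_in ->]]]]]; first by exists x.
  by exists a; apply: connect_edge_pt; [rewrite /step ab orbT | lia].
have orig_conn x y : connect E (orig x) (orig y).
  have /connectP [p xp ->] := e_conn x y.
  elim: p x xp => [|z p IH] x //= /andP [xz zp].
  have xz_conn : connect E (orig x) (orig z).
    rewrite -(edge_pt_end x z (leqnn d)).
    by apply: connect_edge_pt; rewrite // /step xz orbT.
  exact: connect_trans xz_conn (IH _ zp).
move=> u v; have [x xu] := from_orig u; have [y yv] := from_orig v.
rewrite (sym_connect_sym subdiv_rel_sym) in xu.
exact: connect_trans xu (connect_trans (orig_conn x y) yv).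
Qed.

End Subdivision.

Section LowerBound.
Variables (T : finType) (e : rel T) (d' : nat).
Hypotheses (e_sym : symmetric e) (e_irr : irreflexive e).
Local Notation d := d'.+1.
Local Notation W := (T + (T * T * 'I_d))%type.
Local Notation V := (subdiv_vert e d).
Local Notation E := (@subdiv_rel T e d).
Local Notation orig := (orig e d').
Local Notation edge_pt := (edge_pt e d').

(* [cop_dist c p] is the distance in G^(d) from [orig c] to [p], capped at
   [2 d]; [dist_via c v t] is that of a point [t] steps beyond [orig v]. *)
Definition dist_via (c v : T) (t : nat) : nat :=
  if v == c then t else if e c v then d + t else 2 * d.

Definition cop_dist_raw (c : T) (w : W) : nat :=
  match w with
  | inl x => dist_via c x 0
  | inr (a, b, i) => minn (dist_via c a i) (dist_via c b (d - i))
  end.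

Definition cop_dist (c : T) (p : V) : nat := cop_dist_raw c (val p).

Lemma dist_via_succ c v t t' : t <= t'.+1 -> dist_via c v t <= (dist_via c v t').+1.
Proof. by rewrite /dist_via; case: eqP; case: (e c v); lia. Qed.

Lemma dist_via_edge c a b : e a b -> dist_via c a 0 <= (dist_via c b d').+1.
Proof.
move=> ab; rewrite /dist_via; have [<-|bc] := eqVneq b c.
  by rewrite e_sym ab (negPf (edge_neq e_irr ab)) addn0.
by case: eqP => _; case: (e c b); case: (e c a); lia.
Qed.

Lemma dist_via_far c v t : ~~ step e c v -> dist_via c v t = 2 * d.
Proof. by rewrite /dist_via /step eq_sym; case: eqP; case: (e c v). Qed.

Lemma dist_via_ge c v t : t <= d -> v != c -> d + t <= dist_via c v t.
Proof. by move=> le_td vc; rewrite /dist_via (negPf vc); case: (e c v); lia. Qed.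

Lemma cop_dist_raw_adj c w w' : svalid e w -> svalid e w' -> sadj0 e w w' ->
  cop_dist_raw c w' <= (cop_dist_raw c w).+1 /\ cop_dist_raw c w <= (cop_dist_raw c w').+1.
Proof.
case: w => [x|[[a b] i]]; case: w' => [y|[[a' b'] j]] //=.
- move=> _ _ /andP [/eqP d1 xy]; rewrite /dist_via.
  have [<-|xc] := eqVneq x c.
    by rewrite eq_sym (negPf (edge_neq e_irr xy)) xy; lia.
  have [yc|yc] := eqVneq y c; first by subst c; rewrite e_sym xy; lia.
  by case: (e c x); case: (e c y); lia.
- move=> _ /and3P [ab _ _] /orP [] /andP [/eqP x_end /eqP ->]; subst x.
  + have := dist_via_succ c a' (leqnn 1); have := dist_via_succ c a' (leq0n 2).
    by have := dist_via_edge c ab; rewrite (_ : d - 1 = d'); lia.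
  + have := dist_via_succ c b' (leqnn 1); have := dist_via_succ c b' (leq0n 2).
    have ba : e b' a' by rewrite e_sym.
    by have := dist_via_edge c ba; rewrite (_ : d - d' = 1); lia.
- move=> /and3P [_ _ i_pos] /and3P [_ _ j_pos] /and3P [/eqP <- /eqP <- /eqP ij].
  have lt_id := ltn_ord i; have lt_jd := ltn_ord j.
  have := @dist_via_succ c a i j; have := @dist_via_succ c a j i.
  have := @dist_via_succ c b (d - i) (d - j); have := @dist_via_succ c b (d - j) (d - i).
  lia.
Qed.

Lemma cop_dist_step c p p' : step E p p' -> cop_dist c p' <= (cop_dist c p).+1.
Proof.
case/orP => [/eqP -> //|/orP [] adj].
  by case: (cop_dist_raw_adj c (valP p) (valP p') adj).
by case: (cop_dist_raw_adj c (valP p') (valP p) adj).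
Qed.

Lemma cop_dist_near p : exists c, 2 * cop_dist c p <= d.
Proof.
case: p => [[x|[[a b] i]] p_valid]; rewrite /cop_dist /=.
  by exists x; rewrite /dist_via eqxx.
have lt_id := ltn_ord i.
by have [le_2i|gt_2i] := leqP (2 * i) d; [exists a | exists b]; rewrite /dist_via eqxx; lia.
Qed.

Lemma cop_dist_follow c p : 2 * cop_dist c p <= 3 * d ->
  exists2 c', step e c c' & 2 * cop_dist c' p <= d.
Proof.
case: p => [[x|[[a b] i]] p_valid]; rewrite /cop_dist /= => close.
  have [cx|/(dist_via_far 0) far] := boolP (step e c x); last lia.
  by exists x; rewrite /dist_via ?eqxx.
have /and3P [ab _ _] := p_valid; have lt_id := ltn_ord i.
have at_a : 2 * i <= d -> 2 * cop_dist_raw a (inr (a, b, i)) <= d.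
  by rewrite /= /dist_via eqxx; lia.
have at_b : d <= 2 * i -> 2 * cop_dist_raw b (inr (a, b, i)) <= d.
  by rewrite /= /dist_via eqxx; lia.
have [ca|/(dist_via_far i) far_a] := boolP (step e c a);
  have [cb|/(dist_via_far (d - i)) far_b] := boolP (step e c b).
- by have [/at_a|/ltnW/at_b] := leqP (2 * i) d; [exists a | exists b].
- have [/at_a|gt_2i] := leqP (2 * i) d; first by exists a.
  have [ac|ac] := eqVneq a c; last by have := dist_via_ge (ltnW lt_id) ac; lia.
  by move: far_b; rewrite -ac /dist_via eq_sym (negPf (edge_neq e_irr ab)) ab; lia.
- have [lt_2i|/at_b] := ltnP (2 * i) d; last by exists b.
  have [bc|bc] := eqVneq b c; last by have := dist_via_ge (leq_subr i d) bc; lia.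
  by move: far_a; rewrite -bc /dist_via (negPf (edge_neq e_irr ab)) e_sym ab; lia.
- lia.
Qed.

Lemma cop_dist_along c (u u' : T) m n : step e u u' -> m + n <= d ->
  cop_dist c (edge_pt u u' (m + n)) <= cop_dist c (edge_pt u u' m) + n.
Proof.
move=> uu'; elim: n => [|n IH] le_d; first by rewrite !addn0.
have lt_mnd : m + n < d by rewrite -addnS.
have := cop_dist_step c (edge_pt_step e_sym uu' lt_mnd).
by rewrite addnS; have := IH (ltnW lt_mnd); lia.
Qed.

Lemma cop_dist_capture c (u u' : T) m : step e u u' -> m <= d ->
  2 * cop_dist c (edge_pt u u' m) <= d + 2 * m -> step e c u'.
Proof.
move=> uu' le_md close; apply: contraT => /(dist_via_far 0) far.
have along : m + (d - m) <= d by rewrite subnKC.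
have := cop_dist_along c uu' along; rewrite subnKC // edge_pt_end //.
by rewrite [cop_dist c (orig u')]far; lia.
Qed.

(* Invariant: the robber of G^(d) is [j.+1] steps along its way from [u] to
   [u'], where the robber of G stands, and each cop of G is within
   [d/2 + j] of its counterpart in G^(d). *)
Lemma shadow_win k (cd : {ffun 'I_k -> _}) r : cw E cd r ->
  forall j u u' (c : {ffun 'I_k -> T}), step e u u' -> j < d ->
  r = edge_pt u u' j.+1 -> (forall i, 2 * cop_dist (c i) (cd i) <= d + 2 * j) ->
  cw e c u'.
Proof.
elim/cw_ind_strong => {cd r} [cd r [i <-]|cd r cd' move next] j u u' c uu' lt_jd rE close.
  apply: (cw_adjacent (i := i)); apply: (cop_dist_capture uu' lt_jd).
  by rewrite -rE; have := close i; lia.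
have close' i : 2 * cop_dist (c i) (cd' i) <= d + 2 * j.+1.
  by have := cop_dist_step (c i) (move i); have := close i; lia.
case: next => [[i ri]|next].
  by apply: (cw_adjacent (i := i)); apply: (cop_dist_capture uu' lt_jd); rewrite -rE -ri.
have [lt_j1d|ge_j1d] := ltnP j.+1 d.
  rewrite rE in next; have [_ IH] := next _ (edge_pt_step e_sym uu' lt_j1d).
  exact: IH uu' lt_j1d erefl close'.
have follow i : exists c', step e (c i) c' && (2 * cop_dist c' (cd' i) <= d).
  have [c' cc' near] : exists2 c', step e (c i) c' & 2 * cop_dist c' (cd' i) <= d.
    by apply: cop_dist_follow; have := close' i; lia.
  by exists c'; rewrite cc' near.
pose c' := [ffun i => xchoose (follow i)].
apply: (@cw_step _ _ _ _ _ c') => [i|].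
  by rewrite ffunE; case/andP: (xchooseP (follow i)).
right => u'' u'u''.
have r_u'' : step E r (edge_pt u' u'' 1).
  by rewrite rE edge_pt_end // -(edge_pt0 e d' u' u''); apply: edge_pt_step.
have [_ IH] := next _ r_u''; apply: IH u'u'' _ erefl _ => // i.
by rewrite ffunE addn0; case/andP: (xchooseP (follow i)).
Qed.

Lemma cop_win_of_subdiv k : cop_win E k -> cop_win e k.
Proof.
case=> cd win.
have near i : exists c, 2 * cop_dist c (cd i) <= d by apply: cop_dist_near.
exists [ffun i => xchoose (near i)] => r.
apply: (shadow_win (win (orig r)) (j := 0) (u := r)) => //.
- by rewrite /step eqxx.
- by rewrite edge_ptxx.
- by move=> i; rewrite ffunE addn0; exact: (xchooseP (near i)).
Qed.

End LowerBound.

Section UpperBound.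
Variables (T : finType) (e : rel T) (d' k : nat).
Hypotheses (e_sym : symmetric e) (e_irr : irreflexive e).
Hypothesis e_connected : connected_graph e.
Local Notation d := d'.+1.
Local Notation V := (subdiv_vert e d).
Local Notation E := (@subdiv_rel T e d).
Local Notation orig := (orig e d').
Local Notation edge_pt := (edge_pt e d').

Let E_connected : connected_graph E := subdiv_connected e_sym e_irr e_connected.
Local Notation potential := (potential E_connected).

Definition to_orig (c : {ffun 'I_k -> T}) : {ffun 'I_k -> V} := [ffun j => orig (c j)].

Definition to_edge_pt (c c' : {ffun 'I_k -> T}) m : {ffun 'I_k -> V} :=
  [ffun j => edge_pt (c j) (c' j) m].

Lemma to_edge_pt0 c c' : to_edge_pt c c' 0 = to_orig c.
Proof. by apply/ffunP => j; rewrite !ffunE edge_pt0. Qed.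

Lemma to_edge_pt_end c c' : to_edge_pt c c' d = to_orig c'.
Proof. by apply/ffunP => j; rewrite !ffunE edge_pt_end. Qed.

Lemma to_edge_ptxx c m : to_edge_pt c c m = to_orig c.
Proof. by apply/ffunP => j; rewrite !ffunE edge_ptxx. Qed.

Lemma edge_pt_step_pred (x y : T) m : step e x y -> 0 < m <= d ->
  step E (edge_pt x y m.-1) (edge_pt x y m).
Proof. by move=> xy m_in; rewrite -{2}(@prednK m) ?edge_pt_step //; lia. Qed.

Section Phases.
Variable n : nat.
Hypothesis below : chaser_wins_below k E_connected n.

(* The robber has just left the original vertex [s] along the edge [sN]. *)
Definition start_win (o : {ffun 'I_k -> V}) s N := forall x,
  potential x (edge_pt s N 1) (edge_pt s N 0) <= n ->
  cw E (add_cop o x) (edge_pt s N 1).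

Lemma follow_phase (c c' : {ffun 'I_k -> T}) s N :
  (forall j, step e (c j) (c' j)) ->
  captured c' N \/ (forall N', e N N' -> start_win (to_orig c') N N') ->
  e s N -> forall m, 0 < m <= d -> forall x,
  potential x (edge_pt s N m) (edge_pt s N m.-1) <= n ->
  cw E (add_cop (to_edge_pt c c' m.-1) x) (edge_pt s N m).
Proof.
move=> cc' leave sN; have sN_step : step e s N by rewrite /step sN orbT.
move=> m; have [l] := ubnP (d - m); elim: l m => // l IH m lt_dm m_in x le_n.
apply: (chase_round (o' := to_edge_pt c c' m) below (edge_pt_step_pred sN_step m_in)) => //.
  by move=> j; rewrite !ffunE; apply: edge_pt_step_pred.
move=> x' r' rr' r'r r'q not_cap le_n'.
have rr'_rel : E (edge_pt s N m) r' by move: rr'; rewrite /step eq_sym (negPf r'r).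
have [m_d|m_lt] := eqVneq m d.
  move: rr'_rel not_cap le_n'; rewrite m_d edge_pt_end // to_edge_pt_end.
  case: leave => [[i ci] _ not_cap|leave /(orig_nbr e_sym e_irr) [z Nz ->]].
    by case: not_cap; apply: captured_add_cop; exists i; rewrite ffunE ci.
  by rewrite -(edge_pt0 e d' N z) => _; apply: leave.
have m_inner : 0 < m < d by lia.
case: (edge_pt_nbr e_sym e_irr sN m_inner rr'_rel) => r'E; first by rewrite r'E eqxx in r'q.
by rewrite r'E in le_n' *; apply: IH le_n'; lia.
Qed.

Lemma shadow_phase (c : {ffun 'I_k -> T}) N : cw e c N ->
  forall s, e s N -> start_win (to_orig c) s N.
Proof.
elim/cw_ind_strong => {c N} [c N cap|c N c' cc' next] s sN x le_n.
  have stay j : step e (c j) (c j) by rewrite /step eqxx.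
  by have := follow_phase stay (or_introl cap) sN (m := 1) isT le_n; rewrite to_edge_pt0.
have leave : captured c' N \/ (forall N', e N N' -> start_win (to_orig c') N N').
  case: next => [cap|next]; [by left | right] => N' NN'.
  have NN'_step : step e N N' by rewrite /step NN' orbT.
  by have [_ IH] := next N' NN'_step; apply: IH.
by have := follow_phase cc' leave sN (m := 1) isT le_n; rewrite to_edge_pt0.
Qed.

Lemma wait_phase (c0 : {ffun 'I_k -> T}) : (forall r, cw e c0 r) ->
  forall x r q, step E q r -> potential x r q <= n -> cw E (add_cop (to_orig c0) x) r.
Proof.
move=> c0_win.
have stay j : step e (c0 j) (c0 j) by rewrite /step eqxx.
have on_edge x u v : step E u v -> u != v -> potential x v u <= n ->
    cw E (add_cop (to_orig c0) x) v.
  move=> uv /(subdiv_edgeP e_sym e_irr uv) [a [b [m [ab m_in -> ->]]]] le_n.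
  have leave N' (bN' : e b N') : start_win (to_orig c0) b N' :=
    shadow_phase (c0_win N') bN'.
  by have := follow_phase stay (or_intror leave) ab m_in le_n; rewrite to_edge_ptxx.
move=> x r q qr le_n; have [qr_eq|qr_neq] := eqVneq q r; last exact: on_edge qr qr_neq le_n.
subst q; apply: (chase_round (o' := to_orig c0) below qr _ le_n) => [j|x' r' rr' r'r _ _].
  by rewrite /step eqxx.
by apply: on_edge rr' _; rewrite eq_sym.
Qed.

End Phases.

Lemma cop_win_subdiv (x0 : T) : cop_win e k -> cop_win E k.+1.
Proof.
case=> c0 c0_win; exists (add_cop (to_orig c0) (orig x0)) => r.
by apply: (@chase_win _ _ _ E_connected) => n below x r' q; exact: wait_phase.
Qed.

End UpperBound.

Theorem lemma17 (T : finType) (e : rel T) (d : nat) :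
  simple_graph e -> connected_graph e -> (1 <= d)%N ->
  (cop_number e <= cop_number (@subdiv_rel T e d) <= (cop_number e).+1)%N.
Proof.
case=> e_sym e_irr e_connected; case: d => [//|d'] _.
apply/andP; split.
  exact/cop_number_min/(cop_win_of_subdiv e_sym e_irr)/cop_win_cop_number.
have [x0 _|T_empty] := pickP (@predT T).
  exact/cop_number_min/(cop_win_subdiv d' e_sym e_irr e_connected x0)/cop_win_cop_number.
(* With no vertex for the extra cop to start on, G^(d) is empty as well. *)
apply: leq_trans (cop_number_le_card _) _; rewrite eq_card0 // => v.
by case: (subdiv_vertP e_sym e_irr v) => [[x _]|[x _]]; have := T_empty x.
Qed.
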